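(* For every unweighted congestion game $\mathcal{G}$ with cubic latency functions, $\mathrm{PoS}(\mathcal{G})\le 3.322$.
   Context: A weighted congestion game consists of a finite set $[n]=\{1,\dots,n\}$ of players, a finite set $E$ of resources, for each player $i$ a weight $w_i>0$ and a nonempty finite strategy set $\Sigma_i\subseteq 2^E$, and for each resource $e$ a latency function $\ell_e:\mathbb{R}_{\ge 0}\to\mathbb{R}_{\ge 0}$. It is unweighted if $w_i=1$ for all $i$. Cubic latency functions means $\ell_e(x)=\sum_{j=0}^{3}\alpha_{e,j}x^j$ with all $\alpha_{e,j}\ge 0$. For a strategy profile $S=(s_1,\dots,s_n)$, the congestion of $e$ is $L_e(S)=\sum_{i:\,e\in s_i}w_i$, the cost of player $i$ is $c_i(S)=\sum_{e\in s_i}\ell_e(L_e(S))$, and $\mathrm{SUM}(S)=\sum_i c_i(S)$; $S^*$ minimizes $\mathrm{SUM}$. A pure Nash equilibrium (PNE) is a profile $S$ with $c_i(S)\le c_i(S_{-i}\diamond t)$ for all $i$ and $t\in\Sigma_i$, where $(S_{-i}\diamond t)$ replaces $s_i$ by $t$. $\mathrm{PoS}(\mathcal{G})=\min_{S\ \mathrm{PNE}}\mathrm{SUM}(S)/\mathrm{SUM}(S^* )$. *)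

From HB Require Import structures.
From mathcomp Require Import all_boot all_order all_algebra.
Set Implicit Arguments. Unset Strict Implicit. Unset Printing Implicit Defensive.
Import Order.TTheory GRing.Theory Num.Theory.
Local Open Scope ring_scope.

Definition cubic_latency (R : realFieldType) (E : finType)
  (alpha : E -> 'I_4 -> R) (e : E) (x : R) : R :=
  \sum_(j < 4) alpha e j * x ^+ (nat_of_ord j).

Definition load (R : realFieldType) (n : nat) (E : finType)
  (S : 'I_n -> {set E}) (e : E) : R :=
  \sum_(i < n | e \in S i) 1.

Definition cost (R : realFieldType) (n : nat) (E : finType)
  (alpha : E -> 'I_4 -> R) (S : 'I_n -> {set E}) (i : 'I_n) : R :=
  \sum_(e in S i) cubic_latency alpha e (load R S e).

Definition SUM (R : realFieldType) (n : nat) (E : finType)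
  (alpha : E -> 'I_4 -> R) (S : 'I_n -> {set E}) : R :=
  \sum_(i < n) cost alpha S i.

Definition feasible (n : nat) (E : finType) (Sigma : 'I_n -> {set {set E}})
  (S : 'I_n -> {set E}) : Prop :=
  forall i, S i \in Sigma i.

Definition update (n : nat) (E : finType) (S : 'I_n -> {set E}) (i : 'I_n)
  (t : {set E}) : 'I_n -> {set E} :=
  fun j => if j == i then t else S j.

Definition isPNE (R : realFieldType) (n : nat) (E : finType)
  (Sigma : 'I_n -> {set {set E}}) (alpha : E -> 'I_4 -> R)
  (S : 'I_n -> {set E}) : Prop :=
  feasible Sigma S /\
  forall i t, t \in Sigma i -> cost alpha S i <= cost alpha (update S i t) i.

(* Let S be a global minimiser of Rosenthal's potential over the feasible
   profiles.  Since a unilateral deviation changes the potential by exactly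
   the change in the deviator's cost, S is a pure Nash equilibrium.  For any
   feasible T we combine three facts:
   (1) the Nash conditions, SUM S <= sum_e |T_e| l_e(|S_e| + 1);
   (2) minimality, Phi(S) <= Phi(T);
   (3) a per-resource smoothness inequality, with weights c_nash = 0.3317
       on (1) and c_pot = 2.99 on (2), which reduces (by linearity in the
       nonnegative coefficients of l_e) to an inequality between monomials
       x^(k+1), y^(k+1) and the power sums 1^k + ... + m^k, k <= 3, on the
       natural numbers x = |S_e|, y = |T_e|.
   Summing (3) over resources and adding (1) and (2) gives SUM S <= 3.322 SUM T. *)

From HB Require Import structures.
From mathcomp Require Import all_boot all_order all_algebra.
From mathcomp Require Import ring lra.
Import Order.TTheory GRing.Theory Num.Theory.
Local Open Scope ring_scope.

Local Notation c_nash := (3317 / 10000).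
Local Notation c_pot := (299 / 100).
Local Notation rho := (3322%:R / 1000%:R).

Section PowerSums.
Variable R : realFieldType.

(* power_sum k m = 1^k + 2^k + ... + m^k, the discrete antiderivative of the
   monomial x^k; Rosenthal's potential of a polynomial latency is a combination
   of such sums. *)
Definition power_sum (k m : nat) : R := \sum_(j < m) j.+1%:R ^+ k.

Lemma power_sumS k m : power_sum k m.+1 = power_sum k m + m.+1%:R ^+ k.
Proof. by rewrite /power_sum big_ord_recr. Qed.

Lemma power_sum0 m : power_sum 0 m = m%:R.
Proof.
elim: m => [|m IH]; first by rewrite /power_sum big_ord0.
by rewrite power_sumS IH -[m.+1%:R]natr1 expr0.
Qed.

Lemma power_sum1 m : power_sum 1 m = m%:R * (m%:R + 1) / 2.
Proof.
elim: m => [|m IH]; first by rewrite /power_sum big_ord0 mul0r mul0r.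
rewrite power_sumS IH -[m.+1%:R]natr1; lra.
Qed.

Lemma power_sum2 m : power_sum 2 m = m%:R * (m%:R + 1) * (2 * m%:R + 1) / 6.
Proof.
elim: m => [|m IH]; first by rewrite /power_sum big_ord0 !mul0r.
rewrite power_sumS IH -[m.+1%:R]natr1; lra.
Qed.

Lemma power_sum3 m : power_sum 3 m = (m%:R * (m%:R + 1)) ^+ 2 / 4.
Proof.
elim: m => [|m IH]; first by rewrite /power_sum big_ord0 mul0r expr0n mul0r.
rewrite power_sumS IH -[m.+1%:R]natr1; lra.
Qed.

(* A sum-of-squares certificate for the quartic form governing the cubic
   case of smooth_monomial (both loads positive, shifted by one). *)
Lemma quartic_certificate {u v : R} : 0 <= u -> 0 <= v ->
  0 <= 99/1250 * u^+4 - 3317/10000 * u^+3 * v + 5149/2000 * v^+4.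
Proof.
move=> hu hv.
have h1 : 0 <= (u^+2 - 20941/10000 * u * v - 329/100 * v^+2)^+2 by apply: sqr_ge0.
have h2 : 0 <= ((u - 314/100 * v) * v)^+2 by apply: sqr_ge0.
have h3 : 0 <= (v^+2)^+2 by apply: sqr_ge0.
have h4 : 0 <= u^+3 * v by apply: mulr_ge0 => //; apply: exprn_ge0.
have h5 : 0 <= u * v^+3 by apply: mulr_ge0 => //; apply: exprn_ge0.
lra.
Qed.

Lemma nonneg_powers {u : R} : 0 <= u -> [/\ 0 <= u^+2, 0 <= u^+3 & 0 <= u^+4].
Proof. by move=> hu; rewrite !exprn_ge0. Qed.

Lemma nonneg_mixed {u v : R} : 0 <= u -> 0 <= v ->
  [/\ 0 <= u * v, 0 <= u^+2 * v, 0 <= u * v^+2, 0 <= (u - v)^+2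
    & 0 <= (u - v)^+2 * (2 * u + v)].
Proof.
move=> hu hv; split; rewrite ?sqr_ge0 //; apply: mulr_ge0;
  rewrite ?sqr_ge0 ?exprn_ge0 //; lra.
Qed.

(* Integrality matters: each load is
   0 or of the form u + 1 with u >= 0, and each of the four cases is a
   nonnegative combination of the facts above. *)
Lemma smooth_monomial (k x y : nat) : (k < 4)%N ->
  x%:R * x%:R ^+ k + c_nash * (y%:R * x.+1%:R ^+ k - x%:R * x%:R ^+ k)
    + c_pot * (power_sum k y - power_sum k x) <= rho * (y%:R * y%:R ^+ k) :> R.
Proof.
move=> small_k.
case: x => [|x]; case: y => [|y];
  rewrite -?[x.+2%:R]natr1 -?[x.+1%:R]natr1 -?[y.+1%:R]natr1.
- by rewrite /power_sum !big_ord0; lra.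
- have y0 := ler0n R y; have [y2 y3 y4] := nonneg_powers y0.
  case: k small_k => [|[|[|[|//]]]] _;
    rewrite ?power_sum0 ?power_sum1 ?power_sum2 ?power_sum3; lra.
- have x0 := ler0n R x; have [x2 x3 x4] := nonneg_powers x0.
  case: k small_k => [|[|[|[|//]]]] _;
    rewrite ?power_sum0 ?power_sum1 ?power_sum2 ?power_sum3; lra.
have x0 := ler0n R x; have [x2 x3 x4] := nonneg_powers x0.
have y0 := ler0n R y; have [y2 y3 y4] := nonneg_powers y0.
have [xy x2y xy2 sq cub] := nonneg_mixed x0 y0.
have quartic := quartic_certificate x0 y0.
case: k small_k => [|[|[|[|//]]]] _;
  rewrite ?power_sum0 ?power_sum1 ?power_sum2 ?power_sum3; lra.
Qed.
End PowerSums.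

Section CongestionGame.
Variables (R : realFieldType) (n : nat) (E : finType) (alpha : E -> 'I_4 -> R).
Local Notation latency := (cubic_latency alpha).
Implicit Types (S T : 'I_n -> {set E}) (i : 'I_n) (e : E) (t : {set E}).

Lemma sum_indicator (A : {set E}) (f : E -> R) :
  \sum_e (e \in A)%:R * f e = \sum_(e in A) f e.
Proof.
rewrite [RHS]big_mkcond; apply: eq_bigr => e _.
by case: (e \in A); rewrite ?mul1r ?mul0r.
Qed.

Definition nload S e : nat := \sum_(i < n) (e \in S i).
Definition nload_others S i e : nat := \sum_(j < n | j != i) (e \in S j).

Lemma loadE S e : load R S e = (nload S e)%:R.
Proof.
rewrite /load /nload natr_sum big_mkcond /=.
by apply: eq_bigr => i _; case: (e \in S i).
Qed.

Lemma nload_split S i e : nload S e = ((e \in S i) + nload_others S i e)%N.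
Proof. by rewrite /nload (bigD1 i). Qed.

Lemma nload_others_update S i t e :
  nload_others (update S i t) i e = nload_others S i e.
Proof. by apply: eq_bigr => j /negbTE; rewrite /update => ->. Qed.

Lemma update_self S i t : update S i t i = t.
Proof. by rewrite /update eqxx. Qed.

Lemma sum_over_players T (f : E -> R) :
  \sum_(i < n) \sum_(e in T i) f e = \sum_e (nload T e)%:R * f e.
Proof.
under eq_bigr do rewrite -sum_indicator.
rewrite exchange_big; apply: eq_bigr => e _.
by rewrite -mulr_suml /nload natr_sum.
Qed.

Lemma SUM_by_resources S :
  SUM alpha S = \sum_e (nload S e)%:R * latency e (nload S e)%:R.
Proof.
by rewrite /SUM /cost sum_over_players; apply: eq_bigr => e _; rewrite loadE.
Qed.

Lemma cost_by_others S i :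
  cost alpha S i = \sum_(e in S i) latency e (nload_others S i e).+1%:R.
Proof. by apply: eq_bigr => e he; rewrite loadE (nload_split S i) he. Qed.

Definition rosenthal e (m : nat) : R := \sum_(k < m) latency e k.+1%:R.
Definition potential S : R := \sum_e rosenthal e (nload S e).

Lemma potential_split S i :
  potential S = \sum_e rosenthal e (nload_others S i e) + cost alpha S i.
Proof.
rewrite cost_by_others -sum_indicator -big_split; apply: eq_bigr => e _.
rewrite (nload_split S i); case: (e \in S i); rewrite /= ?mul0r ?addr0 ?mul1r //.
by rewrite /rosenthal add1n big_ord_recr.
Qed.

Lemma potential_update S i t :
  potential (update S i t) - potential S = cost alpha (update S i t) i - cost alpha S i.
Proof.
rewrite (potential_split S i) (potential_split (update S i t) i).
under eq_bigr do rewrite nload_others_update.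
lra.
Qed.

Lemma potential_ext S T : (forall i, S i = T i) -> potential S = potential T.
Proof.
move=> eqST; apply: eq_bigr => e _; congr rosenthal.
by apply: eq_bigr => i _; rewrite eqST.
Qed.

Section Equilibrium.
Variable Sigma : 'I_n -> {set {set E}}.

(* The potential attains its minimum over the (finite, nonempty) set of
   feasible profiles; the minimum is searched among finite functions. *)
Lemma exists_potential_minimizer : (forall i, Sigma i != set0) ->
  exists2 S, feasible Sigma S & forall T, feasible Sigma T -> potential S <= potential T.
Proof.
move=> nonempty.
pose feasibleb := [pred f : {ffun 'I_n -> {set E}} | [forall i, f i \in Sigma i]].
have feasible_ffun T : feasible Sigma T -> feasibleb [ffun i => T i].
  by move=> hT; apply/forallP => i; rewrite ffunE.
have [f0 feas_f0] : exists f0, feasibleb f0.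
  exists [ffun i => odflt set0 [pick s in Sigma i]]; apply/forallP => i.
  rewrite ffunE; case: pickP => [//|none].
  by have /set0Pn [s Hs] := nonempty i; move: (none s); rewrite Hs.
case: (arg_minP (fun f : {ffun 'I_n -> {set E}} => potential f) feas_f0) => f feas_f min_f.
exists f => [i|T feasT]; first exact: (forallP feas_f i).
rewrite (@potential_ext T [ffun i => T i]) => [|i]; last by rewrite ffunE.
exact/min_f/feasible_ffun.
Qed.

Lemma potential_minimizer_isPNE S : feasible Sigma S ->
  (forall T, feasible Sigma T -> potential S <= potential T) -> isPNE Sigma alpha S.
Proof.
move=> feasS minS; split=> // i t ht.
have feas_update : feasible Sigma (update S i t).
  by move=> j; rewrite /update; case: eqP => [->|_].
have := minS _ feas_update; have := potential_update S i t; lra.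
Qed.

End Equilibrium.

Lemma rosenthal_power_sums e m :
  rosenthal e m = \sum_(j < 4) alpha e j * power_sum R j m.
Proof.
rewrite /rosenthal /cubic_latency exchange_big; apply: eq_bigr => j _.
by rewrite /power_sum mulr_sumr.
Qed.

Section Smoothness.
Hypothesis alpha_ge0 : forall e j, 0 <= alpha e j.

Lemma latency_mono e (x y : R) : 0 <= x -> x <= y -> latency e x <= latency e y.
Proof.
move=> x_ge0 le_xy; apply: ler_sum => j _; apply: ler_wpM2l; first exact: alpha_ge0.
by apply: lerXn2r; rewrite ?nnegrE // (le_trans x_ge0).
Qed.

(* Upper bound on the total cost of the unilateral deviations from S to T:
   each deviator faces at most the load of S plus itself. *)
Definition deviation_cost S T : R :=
  \sum_e (nload T e)%:R * latency e (nload S e).+1%:R.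

Lemma PNE_deviation_bound Sigma S T :
  isPNE Sigma alpha S -> feasible Sigma T -> SUM alpha S <= deviation_cost S T.
Proof.
move=> [_ stable] feasT.
rewrite /deviation_cost -sum_over_players; apply: ler_sum => i _.
apply: le_trans (stable i (T i) (feasT i)) _.
rewrite cost_by_others update_self; apply: ler_sum => e _.
rewrite nload_others_update; apply: latency_mono; first exact: ler0n.
by rewrite ler_nat (nload_split S i) ltnS leq_addl.
Qed.

Lemma resource_smooth e (x y : nat) :
  x%:R * latency e x%:R + c_nash * (y%:R * latency e x.+1%:R - x%:R * latency e x%:R)
    + c_pot * (rosenthal e y - rosenthal e x) <= rho * (y%:R * latency e y%:R).
Proof.
rewrite !rosenthal_power_sums /cubic_latency.
rewrite !mulr_sumr -!sumrB !mulr_sumr -!big_split /=; apply: ler_sum => j _.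
have := ler_wpM2l (alpha_ge0 e j) (smooth_monomial R j x y (ltn_ord j)).
lra.
Qed.

Lemma game_smooth S T :
  SUM alpha S + c_nash * (deviation_cost S T - SUM alpha S)
    + c_pot * (potential T - potential S) <= rho * SUM alpha T.
Proof.
rewrite /deviation_cost /potential !SUM_by_resources.
rewrite !mulr_sumr -!sumrB !mulr_sumr -!big_split /=.
by apply: ler_sum => e _; exact: resource_smooth.
Qed.

End Smoothness.
End CongestionGame.

Arguments exists_potential_minimizer {R n E} alpha {Sigma}.
Arguments potential_minimizer_isPNE {R n E alpha Sigma S}.
Arguments PNE_deviation_bound {R n E alpha} alpha_ge0 {Sigma S T}.
Arguments game_smooth {R n E alpha} alpha_ge0.

Theorem mainTheorem10 (R : realFieldType) (n : nat) (E : finType)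
  (Sigma : 'I_n -> {set {set E}}) (alpha : E -> 'I_4 -> R)
  (hSigma : forall i, Sigma i != set0)
  (halpha : forall e j, 0 <= alpha e j) :
  exists S : 'I_n -> {set E},
    isPNE Sigma alpha S /\
    forall T : 'I_n -> {set E}, feasible Sigma T ->
      SUM alpha S <= (3322%:R / 1000%:R) * SUM alpha T.
Proof.
have [S feasS minS] := exists_potential_minimizer alpha hSigma.
have pne := potential_minimizer_isPNE feasS minS.
exists S; split=> // T feasT.
have stable := PNE_deviation_bound halpha pne feasT.
have le_potential := minS T feasT.
have smooth := game_smooth halpha S T.
lra.
Qed.
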